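(* Let $X$ be a Banach space and $A,B\in\mathcal{L}(X)$. Then $\sigma_d(AB)=\sigma_d(BA)$.
   Context: $\mathcal{L}(X)$ is the Banach algebra of bounded linear operators on $X$. An element $T$ of $\mathcal{L}(X)$ has a g-Drazin inverse if there is $S\in\mathcal{L}(X)$ with $S=STS$, $S$ commuting with every operator that commutes with $T$, and $T-T^2S$ quasinilpotent (spectral radius $0$). The g-Drazin spectrum is $\sigma_d(T)=\{\lambda\in\mathbb{C} : \lambda I-T \text{ has no g-Drazin inverse in } \mathcal{L}(X)\}$. *)

From Stdlib Require Import Reals.
Open Scope R_scope.

Record Cplx : Type := mkC { Re : R ; Im : R }.
Definition C0 : Cplx := mkC 0 0.
Definition C1 : Cplx := mkC 1 0.
Definition Cadd (a b : Cplx) : Cplx := mkC (Re a + Re b) (Im a + Im b).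
Definition Cmul (a b : Cplx) : Cplx :=
  mkC (Re a * Re b - Im a * Im b) (Re a * Im b + Im a * Re b).
Definition Cabs (a : Cplx) : R := sqrt (Re a * Re a + Im a * Im a).

Record CBanach : Type := {
  pt :> Type;
  vzero : pt;
  vadd : pt -> pt -> pt;
  vopp : pt -> pt;
  vscal : Cplx -> pt -> pt;
  vnorm : pt -> R;
  vadd_assoc : forall x y z, vadd x (vadd y z) = vadd (vadd x y) z;
  vadd_comm : forall x y, vadd x y = vadd y x;
  vadd_0 : forall x, vadd x vzero = x;
  vadd_opp : forall x, vadd x (vopp x) = vzero;
  vscal_1 : forall x, vscal C1 x = x;
  vscal_assoc : forall a b x, vscal a (vscal b x) = vscal (Cmul a b) x;
  vscal_distr_l : forall a x y, vscal a (vadd x y) = vadd (vscal a x) (vscal a y);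
  vscal_distr_r : forall a b x, vscal (Cadd a b) x = vadd (vscal a x) (vscal b x);
  vnorm_eq0 : forall x, vnorm x = 0 -> x = vzero;
  vnorm_scal : forall a x, vnorm (vscal a x) = Cabs a * vnorm x;
  vnorm_triangle : forall x y, vnorm (vadd x y) <= vnorm x + vnorm y;
  vcomplete : forall u : nat -> pt,
    (forall eps, eps > 0 -> exists N, forall m n, (m >= N)%nat -> (n >= N)%nat ->
        vnorm (vadd (u m) (vopp (u n))) < eps) ->
    exists l, forall eps, eps > 0 -> exists N, forall n, (n >= N)%nat ->
        vnorm (vadd (u n) (vopp l)) < eps
}.

Arguments vadd {_}. Arguments vopp {_}. Arguments vscal {_}. Arguments vnorm {_}.

Section Ops.
Variable X : CBanach.

Definition bounded_linear (T : X -> X) : Prop :=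
  (forall x y, T (vadd x y) = vadd (T x) (T y)) /\
  (forall a x, T (vscal a x) = vscal a (T x)) /\
  (exists M : R, forall x, vnorm (T x) <= M * vnorm x).

Definition opcomp (S T : X -> X) : X -> X := fun x => S (T x).
Definition opsub (S T : X -> X) : X -> X := fun x => vadd (S x) (vopp (T x)).
Definition opId : X -> X := fun x => x.
Definition shift (lam : Cplx) (T : X -> X) : X -> X := fun x => vadd (vscal lam x) (vopp (T x)).

Definition invertibleL (T : X -> X) : Prop :=
  exists S, bounded_linear S /\ opcomp S T = opId /\ opcomp T S = opId.

Definition spectrum (T : X -> X) (lam : Cplx) : Prop := ~ invertibleL (shift lam T).

(** Quasinilpotent: spectral radius sup{|lam| : lam in spectrum} equals 0,
    i.e. every spectral value has modulus 0. *)
Definition quasinilpotent (T : X -> X) : Prop :=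
  forall lam, spectrum T lam -> Cabs lam = 0.

Definition has_gDrazin (T : X -> X) : Prop :=
  exists S, bounded_linear S /\
    S = opcomp S (opcomp T S) /\
    (forall U, bounded_linear U -> opcomp U T = opcomp T U -> opcomp U S = opcomp S U) /\
    quasinilpotent (opsub T (opcomp T (opcomp T S))).

Definition sigma_d (T : X -> X) (lam : Cplx) : Prop := ~ has_gDrazin (shift lam T).

End Ops.

(** Everything happens in a unital complex algebra, abstracted as a
   (noncommutative) ring [A] with a central unital multiplicative map
   [sc : Cplx -> A]; invertibility, quasinilpotence ("every [sc l - t] with
   [l <> 0] is invertible") and g-Drazin invertibility are defined there.
   - A g-Drazin inverse is recognised from a spectral idempotent [P]:
     if [tS = St = 1 - P], [PS = SP = 0], [P] idempotent commuting with [t],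
     [tP] quasinilpotent and [P] in the double commutant of [t], then [S] is
     the g-Drazin inverse of [t] ([gdrazin_of_spectral_idempotent]).
   - With this criterion we prove Cline's formula ([ab] g-Drazin invertible
     implies [ba] is, with inverse [b s^2 a]) and Jacobson's lemma ([1 - ab]
     implies [1 - ba]); quasinilpotence is transferred by the Jacobson lemma
     for units ([quasinil_swap]).
   - Rescaling by a nonzero scalar reduces [l - ab] to [1 - (l^-1 a) b], which
     gives [gdrazin_swap]; the case [l = 0] is Cline's formula. *)

From Pilot Require Import Defs.
From Stdlib Require Import Reals Lra ProofIrrelevance FunctionalExtensionality Classical.
From Stdlib Require Import Ncring Ncring_tac.
(* Re-import so that [C1] denotes the complex unit rather than the class of
   C^1 functions from Reals. *)
Import Defs.
Open Scope R_scope.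

Lemma Cmul_comm (a b : Cplx) : Cmul a b = Cmul b a.
Proof. destruct a, b; unfold Cmul; simpl; f_equal; ring. Qed.

Lemma Cmul_assoc (a b c : Cplx) : Cmul a (Cmul b c) = Cmul (Cmul a b) c.
Proof. destruct a, b, c; unfold Cmul; simpl; f_equal; ring. Qed.

Lemma Cmul_1l (a : Cplx) : Cmul C1 a = a.
Proof. destruct a; unfold Cmul, C1; simpl; f_equal; ring. Qed.

Lemma Cabs_C1 : Cabs C1 = 1.
Proof. unfold Cabs, C1; simpl. replace (1 * 1 + 0 * 0) with 1 by ring. apply sqrt_1. Qed.

Lemma Cabs_Cmul (a b : Cplx) : Cabs (Cmul a b) = Cabs a * Cabs b.
Proof.
  unfold Cabs. rewrite <- sqrt_mult by nra. f_equal.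
  destruct a, b; unfold Cmul; simpl; ring.
Qed.

Lemma Cabs_eq0 (a : Cplx) : Cabs a = 0 -> a = C0.
Proof.
  unfold Cabs; intros H. apply sqrt_eq_0 in H; [|nra].
  destruct a as [x y]; unfold C0; simpl in *. f_equal; nra.
Qed.

Lemma Cinv_exists (a : Cplx) : Cabs a <> 0 -> exists b, Cmul a b = C1 /\ Cabs b <> 0.
Proof.
  intros Ha. set (n := Re a * Re a + Im a * Im a).
  assert (Hn : n <> 0) by (intros E; apply Ha; unfold Cabs; fold n; rewrite E; apply sqrt_0).
  assert (Hab : Cmul a (mkC (Re a / n) (- Im a / n)) = C1).
  { destruct a as [x y]; unfold Cmul, C1, n in *; simpl in *. f_equal; field; exact Hn. }
  exists (mkC (Re a / n) (- Im a / n)). split; [exact Hab|].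
  intros E. pose proof (Cabs_Cmul a (mkC (Re a / n) (- Im a / n))) as H.
  rewrite Hab, Cabs_C1, E in H. lra.
Qed.

Ltac ring_step e := transitivity e; [non_commutative_ring|].

Declare Scope alg_scope.

(** * g-Drazin inverses in an abstract unital complex algebra *)

Section GDrazinAlgebra.
Context {A : Type} {zero one : A} {add mul sub : A -> A -> A} {opp : A -> A}.
Context {Aops : @Ring_ops A zero one add mul sub opp (@eq A)}.
Context {Aring : @Ring A zero one add mul sub opp (@eq A) Aops}.

Local Infix "*" := mul : alg_scope.
Local Infix "+" := add : alg_scope.
Local Infix "-" := sub : alg_scope.
Local Notation "1" := one : alg_scope.
Local Notation "0" := zero : alg_scope.
Local Open Scope alg_scope.

Record central_scalars (sc : Cplx -> A) : Prop := {
  sc_one : sc C1 = 1;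
  sc_zero : sc C0 = 0;
  sc_mul : forall l m, sc l * sc m = sc (Cmul l m);
  sc_central : forall l x, sc l * x = x * sc l }.

Variable sc : Cplx -> A.
Hypothesis Hsc : central_scalars sc.

Definition invertible (u : A) : Prop := exists v, v * u = 1 /\ u * v = 1.

Definition qnil (t : A) : Prop := forall l, Cabs l <> 0%R -> invertible (sc l - t).

Definition gdrazin (t : A) : Prop :=
  exists s, s = s * (t * s) /\ (forall u, u * t = t * u -> u * s = s * u) /\
            qnil (t - t * (t * s)).

Lemma commute_inv (K w y : A) : K * w = 1 -> w * K = 1 -> w * y = y * w -> K * y = y * K.
Proof.
  intros H1 H2 H3. ring_step (K * (y * w) * K + K * y * (1 - w * K)).
  rewrite <- H3, H2. ring_step ((K * w) * (y * K)). rewrite H1. non_commutative_ring.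
Qed.

Lemma commute_mul (x y z : A) : x * z = z * x -> y * z = z * y -> (x * y) * z = z * (x * y).
Proof.
  intros H1 H2. ring_step (x * (y * z)). rewrite H2.
  ring_step ((x * z) * y). rewrite H1. non_commutative_ring.
Qed.

Lemma invertible_mul (x y : A) : invertible x -> invertible y -> invertible (x * y).
Proof.
  intros [v [H1 H2]] [w [H3 H4]]. exists (w * v). split.
  - ring_step (w * (v * x) * y). rewrite H1. ring_step (w * y). exact H3.
  - ring_step (x * (y * w) * v). rewrite H4. ring_step (x * v). exact H2.
Qed.

Lemma invertible_cancel_l (c m z : A) :
  c * m = 1 -> m * c = 1 -> invertible (c * z) -> invertible z.
Proof.
  intros Hcm Hmc [V [H1 H2]]. exists (V * c). split.
  - ring_step (V * (c * z)). exact H1.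
  - transitivity ((m * c) * z * (V * c)); [rewrite Hmc; non_commutative_ring|].
    ring_step (m * ((c * z) * V) * c). rewrite H2. ring_step (m * c). exact Hmc.
Qed.

Lemma jacobson_invertible (x y : A) : invertible (1 - x * y) -> invertible (1 - y * x).
Proof.
  intros [V [H1 H2]]. exists (1 + y * V * x). split.
  - ring_step (1 - y * x + y * (V * (1 - x * y)) * x). rewrite H1. non_commutative_ring.
  - ring_step (1 - y * x + y * ((1 - x * y) * V) * x). rewrite H2. non_commutative_ring.
Qed.

Lemma scalar_inverse (l : Cplx) : Cabs l <> 0%R ->
  exists mu, sc l * sc mu = 1 /\ sc mu * sc l = 1 /\ Cmul l mu = C1 /\ Cabs mu <> 0%R.
Proof.
  intros Hl. destruct (Cinv_exists l Hl) as [mu [Hm Hmu]]. exists mu.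
  assert (Hlm : sc l * sc mu = 1) by (rewrite (sc_mul _ Hsc), Hm; apply (sc_one _ Hsc)).
  repeat split; auto. rewrite <- (sc_central _ Hsc). exact Hlm.
Qed.

Lemma scalar_factor (l mu : Cplx) (x y : A) : sc l * sc mu = 1 ->
  sc l - x * y = sc l * (1 - (sc mu * x) * y).
Proof.
  intros Hlm. symmetry. ring_step (sc l - (sc l * sc mu) * x * y). rewrite Hlm.
  non_commutative_ring.
Qed.

Lemma quasinil_swap (x y : A) : qnil (x * y) -> qnil (y * x).
Proof.
  intros H l Hl. destruct (scalar_inverse l Hl) as [mu [Hlm [Hml _]]].
  assert (E : sc l - y * x = sc l * (1 - y * (sc mu * x))).
  { symmetry. ring_step (sc l - (sc l * y) * (sc mu * x)). rewrite (sc_central _ Hsc).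
    ring_step (sc l - y * ((sc l * sc mu) * x)). rewrite Hlm. non_commutative_ring. }
  specialize (H l Hl). rewrite (scalar_factor l mu x y Hlm) in H.
  apply (invertible_cancel_l _ _ _ Hlm Hml), jacobson_invertible in H.
  rewrite E. apply invertible_mul; [exists (sc mu); split|]; auto.
Qed.

Lemma gdrazin_scale (l : Cplx) (t : A) : Cabs l <> 0%R -> gdrazin t -> gdrazin (sc l * t).
Proof.
  intros Hl [s [Hs [Hc Hq]]]. destruct (scalar_inverse l Hl) as [mu [Hlm [Hml [Hm Hmu]]]].
  pose proof (sc_central _ Hsc) as Hcen.
  exists (sc mu * s). split; [|split].
  - symmetry. ring_step (sc mu * (s * sc l) * (t * (sc mu * s))).
    rewrite <- (Hcen l s), (Hcen mu s).
    ring_step ((sc mu * sc l) * (s * (t * s)) * sc mu). rewrite Hml, <- Hs.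
    non_commutative_ring.
  - intros u Hu. assert (Hut : u * t = t * u).
    { transitivity ((sc mu * sc l) * (u * t)); [rewrite Hml; non_commutative_ring|].
      ring_step (sc mu * ((sc l * u) * t)). rewrite (Hcen l u).
      ring_step (sc mu * (u * (sc l * t))). rewrite Hu.
      ring_step ((sc mu * sc l) * (t * u)). rewrite Hml. non_commutative_ring. }
    ring_step ((u * sc mu) * s). rewrite <- (Hcen mu u).
    ring_step (sc mu * (u * s)). rewrite (Hc u Hut). non_commutative_ring.
  - set (r := t - t * (t * s)).
    assert (E : sc l * t - (sc l * t) * ((sc l * t) * (sc mu * s)) = sc l * r).
    { ring_step (sc l * t - sc l * t * sc l * (t * sc mu) * s). rewrite <- (Hcen mu t).
      ring_step (sc l * t - sc l * t * (sc l * sc mu) * t * s). rewrite Hlm.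
      unfold r. non_commutative_ring. }
    rewrite E. intros nu Hnu.
    assert (E2 : sc nu - sc l * r = sc l * (sc (Cmul mu nu) - r)).
    { symmetry. ring_step (sc l * sc (Cmul mu nu) - sc l * r).
      rewrite (sc_mul _ Hsc), Cmul_assoc, Hm, Cmul_1l. reflexivity. }
    rewrite E2. apply invertible_mul; [exists (sc mu); split; auto|].
    apply Hq. rewrite Cabs_Cmul. apply Rmult_integral_contrapositive; auto.
Qed.

Section SpectralIdempotent.
Variables t S P : A.
Hypothesis HtS : t * S = 1 - P.
Hypothesis HSt : S * t = 1 - P.
Hypothesis HPS : P * S = 0.
Hypothesis HSP : S * P = 0.
Hypothesis HPP : P * P = P.
Hypothesis HtP : t * P = P * t.

Lemma perturbed_inverse (Z : A) : Z * (1 - t * P) = 1 -> (1 - t * P) * Z = 1 ->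
  (S - P * Z) * (t - P) = 1 /\ (t - P) * (S - P * Z) = 1 /\ (S - P * Z) * (1 - P) = S.
Proof.
  intros HZ1 HZ2.
  assert (Hr1 : (t * P) * P = t * P) by (ring_step (t * (P * P)); rewrite HPP; reflexivity).
  assert (Hr2 : P * (t * P) = t * P) by (ring_step ((P * t) * P); rewrite <- HtP; exact Hr1).
  assert (HZP : Z * P = P * Z).
  { apply (commute_inv Z (1 - t * P)); auto.
    ring_step (P - (t * P) * P). rewrite Hr1. symmetry.
    ring_step (P - P * (t * P)). rewrite Hr2. reflexivity. }
  split; [|split].
  - ring_step (S * t - S * P - (P * Z) * t + (P * Z) * P). rewrite HSt, HSP, <- HZP.
    ring_step (1 - P - Z * (P * t) + Z * (P * P)). rewrite <- HtP, HPP.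
    ring_step (1 - P + Z * (1 - t * P) * P + Z * ((t * P) * P - t * P)).
    rewrite HZ1, Hr1. non_commutative_ring.
  - ring_step (t * S - (t * P) * Z - P * S + (P * P) * Z). rewrite HtS, HPS, HPP.
    ring_step (1 - P + P * ((1 - t * P) * Z) + (P * (t * P) - t * P) * Z).
    rewrite HZ2, Hr2. non_commutative_ring.
  - ring_step (S - S * P - P * Z + (P * Z) * P). rewrite <- HZP, HSP.
    ring_step (S - Z * P + Z * (P * P)). rewrite HPP. non_commutative_ring.
Qed.

(* Any [U] commuting with [t] commutes with [P], hence with [t - P] and
   its inverse, hence with [S]. *)
Lemma gdrazin_of_spectral_idempotent :
  qnil (t * P) -> (forall U, U * t = t * U -> U * P = P * U) -> gdrazin t.
Proof.
  intros Hq HcP. exists S. split; [|split].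
  - rewrite HtS. symmetry. ring_step (S - S * P). rewrite HSP. non_commutative_ring.
  - intros U HU. destruct (Hq C1) as [Z [HZ1 HZ2]]; [rewrite Cabs_C1; lra|].
    rewrite (sc_one _ Hsc) in HZ1, HZ2.
    destruct (perturbed_inverse Z HZ1 HZ2) as [HVl [HVr HS]].
    assert (HUP := HcP U HU).
    assert (HVU : (S - P * Z) * U = U * (S - P * Z)).
    { apply (commute_inv _ (t - P)); auto.
      ring_step (t * U - P * U). rewrite <- HU, <- HUP. non_commutative_ring. }
    transitivity (U * ((S - P * Z) * (1 - P))); [rewrite HS; reflexivity|].
    ring_step ((U * (S - P * Z)) * (1 - P)). rewrite <- HVU.
    ring_step ((S - P * Z) * (U - U * P)). rewrite HUP.
    ring_step (((S - P * Z) * (1 - P)) * U). rewrite HS. reflexivity.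
  - replace (t - t * (t * S)) with (t * P); [exact Hq|].
    rewrite HtS. non_commutative_ring.
Qed.
End SpectralIdempotent.

Lemma commute_transfer (a b U Y : A) :
  U * (b * a) = (b * a) * U -> Y * (a * U * b) = (a * U * b) * Y -> Y * (a * b) = (a * b) * Y ->
  U * (b * ((a * b) * Y) * a) = (b * ((a * b) * Y) * a) * U.
Proof.
  intros HU HY1 HY2. ring_step ((U * (b * a)) * (b * Y * a)). rewrite HU.
  ring_step (b * ((a * U * b) * Y) * a). rewrite <- HY1.
  ring_step ((b * Y * a) * (U * (b * a))). rewrite HU.
  ring_step (b * (Y * (a * b)) * a * U). rewrite HY2. non_commutative_ring.
Qed.

(* Cline's formula: if [s] is the g-Drazin inverse of [ab], then [b s^2 a]
   is that of [ba], with spectral idempotent [1 - b s a]. *)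
Section Cline.
Variables a b s : A.
Hypothesis Hs : s = s * ((a * b) * s).
Hypothesis Hc : forall u, u * (a * b) = (a * b) * u -> u * s = s * u.
Hypothesis Hq : qnil (a * b - (a * b) * ((a * b) * s)).
Let Hst : s * (a * b) = (a * b) * s := eq_sym (Hc (a * b) eq_refl).

Lemma cline_left : s * (s * (a * b)) = s.
Proof. rewrite Hst. symmetry. exact Hs. Qed.

Lemma cline_right : (a * b) * (s * s) = s.
Proof.
  ring_step ((a * b * s) * s). rewrite <- Hst.
  ring_step (s * ((a * b) * s)). symmetry. exact Hs.
Qed.

Lemma cline_gdrazin : gdrazin (b * a).
Proof.
  apply (gdrazin_of_spectral_idempotent (b * a) (b * (s * s) * a) (1 - b * s * a)).
  - ring_step (b * ((a * b) * (s * s)) * a). rewrite cline_right. non_commutative_ring.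
  - ring_step (b * (s * (s * (a * b))) * a). rewrite cline_left. non_commutative_ring.
  - ring_step (b * (s * s) * a - b * (s * ((a * b) * (s * s))) * a). rewrite cline_right.
    non_commutative_ring.
  - ring_step (b * (s * s) * a - b * ((s * (s * (a * b))) * s) * a). rewrite cline_left.
    non_commutative_ring.
  - ring_step (1 - b * s * a - b * s * a + b * (s * ((a * b) * s)) * a). rewrite <- Hs.
    non_commutative_ring.
  - ring_step (b * a - b * ((a * b) * s) * a). rewrite <- Hst. non_commutative_ring.
  - replace ((b * a) * (1 - b * s * a)) with (b * ((1 - (a * b) * s) * a))
      by non_commutative_ring.
    apply quasinil_swap. replace ((1 - (a * b) * s) * a * b) with (a * b - (a * b) * (s * (a * b)))
      by non_commutative_ring.
    rewrite Hst. exact Hq.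
  - intros U HU.
    assert (HsU : s * (a * U * b) = (a * U * b) * s).
    { symmetry. apply Hc. ring_step (a * (U * (b * a)) * b). rewrite HU. non_commutative_ring. }
    assert (E : b * s * a = b * ((a * b) * (s * s)) * a) by (rewrite cline_right; reflexivity).
    assert (HUs : U * (b * s * a) = (b * s * a) * U).
    { rewrite E. apply commute_transfer; auto; apply commute_mul; auto. }
    ring_step (U - U * (b * s * a)). rewrite HUs. non_commutative_ring.
Qed.
End Cline.

(* Jacobson's lemma: if [s] is the g-Drazin inverse of [al = 1 - ab], with
   spectral idempotent [p = 1 - al s] and [K] the inverse of [1 - q],
   [q = al p], then [1 + bsa - b w a] with [w = pK] is that of [1 - ba],
   with spectral idempotent [b w a]. *)
Section Jacobson.
Variables a b s K : A.
Local Notation al := (1 - a * b).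
Local Notation p := (1 - al * s).
Local Notation q := (al - al * (al * s)).
Local Notation w := (p * K).
Hypothesis Hs : s = s * (al * s).
Hypothesis Hc : forall u, u * al = al * u -> u * s = s * u.
Hypothesis Hq : qnil q.
Hypothesis HK1 : K * (1 - q) = 1.
Hypothesis HK2 : (1 - q) * K = 1.
Let Hst : s * al = al * s := eq_sym (Hc al eq_refl).

Lemma idem_al : p * al = al * p.
Proof. ring_step (al - al * (s * al)). rewrite Hst. non_commutative_ring. Qed.

Lemma idem_idem : p * p = p.
Proof.
  ring_step (1 - al * s - al * s + al * (s * (al * s))). rewrite <- Hs.
  non_commutative_ring.
Qed.

Lemma idem_s : p * s = 0.
Proof.
  ring_step (s - (al * s) * s). rewrite <- Hst.
  ring_step (s - s * (al * s)). rewrite <- Hs. non_commutative_ring.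
Qed.

Lemma s_idem : s * p = 0.
Proof. ring_step (s - s * (al * s)). rewrite <- Hs. non_commutative_ring. Qed.

Lemma idem_q : p * q = q.
Proof.
  ring_step (p * al * p). rewrite idem_al.
  ring_step (al * (p * p)). rewrite idem_idem. non_commutative_ring.
Qed.

Lemma q_idem : q * p = q.
Proof. ring_step (al * (p * p)). rewrite idem_idem. non_commutative_ring. Qed.

Lemma K_commute (y : A) : q * y = y * q -> K * y = y * K.
Proof.
  intros Hy. apply (commute_inv K (1 - q)); auto.
  ring_step (y - q * y). rewrite Hy. non_commutative_ring.
Qed.

Lemma K_idem : K * p = p * K.
Proof. apply K_commute. rewrite q_idem, idem_q. reflexivity. Qed.

Lemma K_al : K * al = al * K.
Proof. apply K_commute. ring_step (al * (p * al)). rewrite idem_al. non_commutative_ring. Qed.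

Lemma idem_K : (p - al * p) * K = p.
Proof.
  ring_step ((p - q) * K). ring_step (p * ((1 - q) * K) + (p * q - q) * K).
  rewrite HK2, idem_q. non_commutative_ring.
Qed.

Lemma ab_w : (a * b) * w = p.
Proof. ring_step ((p - al * p) * K). apply idem_K. Qed.

Lemma w_ab : w * (a * b) = p.
Proof.
  ring_step (p * K - p * (K * al)). rewrite K_al.
  ring_step ((p - p * al) * K). rewrite idem_al. apply idem_K.
Qed.

Lemma w_idem : w * p = w.
Proof.
  ring_step (p * (K * p)). rewrite K_idem.
  ring_step ((p * p) * K). rewrite idem_idem. reflexivity.
Qed.

Lemma idem_w : p * w = w.
Proof. ring_step ((p * p) * K). rewrite idem_idem. reflexivity. Qed.

Lemma jacobson_commutant (U : A) :
  U * (1 - b * a) = (1 - b * a) * U -> U * (b * w * a) = (b * w * a) * U.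
Proof.
  intros HU.
  assert (HUba : U * (b * a) = (b * a) * U).
  { ring_step (U - U * (1 - b * a)). rewrite HU. non_commutative_ring. }
  assert (Hal : (a * U * b) * al = al * (a * U * b)).
  { ring_step (a * U * b - a * (U * (b * a)) * b). rewrite HUba. non_commutative_ring. }
  assert (HsU : s * (a * U * b) = (a * U * b) * s) by (symmetry; apply Hc; exact Hal).
  assert (HpU : p * (a * U * b) = (a * U * b) * p).
  { ring_step (a * U * b - al * (s * (a * U * b))). rewrite HsU.
    ring_step (a * U * b - (al * (a * U * b)) * s). rewrite <- Hal. non_commutative_ring. }
  assert (HqU : q * (a * U * b) = (a * U * b) * q).
  { ring_step (al * (p * (a * U * b))). rewrite HpU.
    ring_step ((al * (a * U * b)) * p). rewrite <- Hal. non_commutative_ring. }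
  assert (HwU : w * (a * U * b) = (a * U * b) * w)
    by (apply commute_mul; [exact HpU|apply K_commute; exact HqU]).
  assert (Hwab : w * (a * b) = (a * b) * w) by (rewrite w_ab, ab_w; reflexivity).
  assert (E : b * w * a = b * ((a * b) * (w * w)) * a).
  { symmetry. ring_step (b * (((a * b) * w) * w) * a). rewrite ab_w, idem_w. reflexivity. }
  rewrite E. apply commute_transfer; auto; apply commute_mul; auto.
Qed.

Lemma jacobson_gdrazin_core : gdrazin (1 - b * a).
Proof.
  apply (gdrazin_of_spectral_idempotent (1 - b * a) (1 + b * s * a - b * w * a) (b * w * a)).
  - ring_step (1 - b * a + b * (al * s) * a - b * w * a + b * ((a * b) * w) * a).
    rewrite ab_w. non_commutative_ring.
  - ring_step (1 - b * a + b * (s * al) * a - b * w * a + b * (w * (a * b)) * a).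
    rewrite w_ab, Hst. non_commutative_ring.
  - ring_step (b * w * a + b * (w * (a * b)) * s * a - b * (w * (a * b)) * w * a).
    rewrite w_ab. ring_step (b * w * a + b * (p * s) * a - b * (p * w) * a).
    rewrite idem_s, idem_w. non_commutative_ring.
  - ring_step (b * w * a + b * (s * ((a * b) * w)) * a - b * (w * ((a * b) * w)) * a).
    rewrite ab_w. ring_step (b * w * a + b * (s * p) * a - b * (w * p) * a).
    rewrite s_idem, w_idem. non_commutative_ring.
  - ring_step (b * (w * (a * b)) * w * a). rewrite w_ab.
    ring_step (b * (p * w) * a). rewrite idem_w. reflexivity.
  - ring_step (b * w * a - b * ((a * b) * w) * a). rewrite ab_w. symmetry.
    ring_step (b * w * a - b * (w * (a * b)) * a). rewrite w_ab. reflexivity.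
  - replace ((1 - b * a) * (b * w * a)) with (b * ((w - p) * a)).
    + apply quasinil_swap. replace ((w - p) * a * b) with q; [exact Hq|].
      symmetry. ring_step (w * (a * b) - p * (a * b)). rewrite w_ab.
      ring_step (p * al). rewrite idem_al. non_commutative_ring.
    + symmetry. ring_step (b * w * a - b * ((a * b) * w) * a). rewrite ab_w. non_commutative_ring.
  - exact jacobson_commutant.
Qed.
End Jacobson.

Lemma cline (a b : A) : gdrazin (a * b) -> gdrazin (b * a).
Proof. intros [s [Hs [Hc Hq]]]. exact (cline_gdrazin a b s Hs Hc Hq). Qed.

Lemma jacobson_gdrazin (a b : A) : gdrazin (1 - a * b) -> gdrazin (1 - b * a).
Proof.
  intros [s [Hs [Hc Hq]]].
  destruct (Hq C1) as [K [HK1 HK2]]; [rewrite Cabs_C1; lra|].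
  rewrite (sc_one _ Hsc) in HK1, HK2.
  exact (jacobson_gdrazin_core a b s K Hs Hc Hq HK1 HK2).
Qed.

Lemma gdrazin_swap (a b : A) (l : Cplx) : gdrazin (sc l - a * b) -> gdrazin (sc l - b * a).
Proof.
  intros H. destruct (Req_dec (Cabs l) 0) as [Hl|Hl].
  - apply Cabs_eq0 in Hl. subst l. rewrite (sc_zero _ Hsc) in *.
    replace (0 - a * b) with ((0 - a) * b) in H by non_commutative_ring.
    replace (0 - b * a) with (b * (0 - a)) by non_commutative_ring.
    apply cline. exact H.
  - destruct (scalar_inverse l Hl) as [mu [Hlm [Hml [_ Hmu]]]].
    rewrite (scalar_factor l mu a b Hlm) in H.
    apply (gdrazin_scale mu) in H; [|exact Hmu].
    replace (sc mu * (sc l * (1 - sc mu * a * b))) with (1 - (sc mu * a) * b) in H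
      by (symmetry; ring_step ((sc mu * sc l) * (1 - sc mu * a * b));
          rewrite Hml; non_commutative_ring).
    apply jacobson_gdrazin, (gdrazin_scale l) in H; [|exact Hl].
    replace (sc l - b * a) with (sc l * (1 - b * (sc mu * a))); [exact H|].
    ring_step (sc l - (sc l * b) * (sc mu * a)). rewrite (sc_central _ Hsc).
    ring_step (sc l - b * ((sc l * sc mu) * a)). rewrite Hlm. non_commutative_ring.
Qed.

End GDrazinAlgebra.

(** * Bounded operators on a complex Banach space *)

Section BoundedOperators.
Variable X : CBanach.

Lemma vadd_0l (x : X) : vadd (vzero X) x = x.
Proof. rewrite vadd_comm. apply vadd_0. Qed.

Lemma vadd_idem_zero (x : X) : vadd x x = x -> x = vzero X.
Proof.
  intros H. rewrite <- (vadd_opp X x). rewrite <- H at 2.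
  rewrite <- vadd_assoc, vadd_opp, vadd_0. reflexivity.
Qed.

Lemma vscal_C0 (x : X) : vscal C0 x = vzero X.
Proof.
  apply vadd_idem_zero. rewrite <- vscal_distr_r. f_equal.
  unfold Cadd, C0; simpl. f_equal; ring.
Qed.

Lemma vopp_unique (x y : X) : vadd x y = vzero X -> y = vopp x.
Proof.
  intros H. rewrite <- (vadd_0 X y), <- (vadd_opp X x).
  rewrite vadd_assoc, (vadd_comm X y x), H. apply vadd_0l.
Qed.

Lemma vopp_scal (x : X) : vopp x = vscal (mkC (-1) 0) x.
Proof.
  symmetry. apply vopp_unique. rewrite <- (vscal_1 X x) at 1.
  rewrite <- vscal_distr_r, <- (vscal_C0 x). f_equal.
  unfold Cadd, C0, C1; simpl. f_equal; ring.
Qed.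

Lemma vscal_vzero (a : Cplx) : vscal a (vzero X) = vzero X.
Proof.
  rewrite <- (vscal_C0 (vzero X)) at 1. rewrite vscal_assoc.
  replace (Cmul a C0) with C0 by (destruct a; unfold Cmul, C0; simpl; f_equal; ring).
  apply vscal_C0.
Qed.

Lemma vscal_comm (a b : Cplx) (x : X) : vscal a (vscal b x) = vscal b (vscal a x).
Proof. rewrite !vscal_assoc, Cmul_comm. reflexivity. Qed.

Lemma vopp_add (x y : X) : vopp (vadd x y) = vadd (vopp x) (vopp y).
Proof. rewrite !vopp_scal, vscal_distr_l. reflexivity. Qed.

Lemma vopp_vscal (a : Cplx) (x : X) : vopp (vscal a x) = vscal a (vopp x).
Proof. rewrite !vopp_scal, vscal_comm. reflexivity. Qed.

Lemma vnorm_zero : vnorm (vzero X) = 0.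
Proof.
  rewrite <- (vscal_C0 (vzero X)), vnorm_scal.
  replace (Cabs C0) with 0; [ring|]. unfold Cabs, C0; simpl.
  replace (0 * 0 + 0 * 0) with 0 by ring. symmetry. apply sqrt_0.
Qed.

Lemma vnorm_opp (x : X) : vnorm (vopp x) = vnorm x.
Proof.
  rewrite vopp_scal, vnorm_scal. replace (Cabs (mkC (-1) 0)) with 1; [ring|].
  unfold Cabs; simpl. replace (-1 * -1 + 0 * 0) with 1 by ring. symmetry. apply sqrt_1.
Qed.

Lemma vnorm_ge0 (x : X) : 0 <= vnorm x.
Proof.
  pose proof (vnorm_triangle X x (vopp x)) as H.
  rewrite vadd_opp, vnorm_zero, vnorm_opp in H. lra.
Qed.

Lemma bound_nonneg (T : X -> X) : bounded_linear X T ->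
  exists M, 0 <= M /\ forall x, vnorm (T x) <= M * vnorm x.
Proof.
  intros [_ [_ [M HM]]]. exists (Rabs M). split; [apply Rabs_pos|]. intros x.
  eapply Rle_trans; [apply HM|]. apply Rmult_le_compat_r; [apply vnorm_ge0|apply Rle_abs].
Qed.

Lemma bl_comp (S T : X -> X) :
  bounded_linear X S -> bounded_linear X T -> bounded_linear X (opcomp X S T).
Proof.
  intros HS HT. destruct (bound_nonneg S HS) as [M1 [P1 H1]].
  destruct (bound_nonneg T HT) as [M2 [P2 H2]].
  destruct HS as [S1 [S2 _]], HT as [T1 [T2 _]]. unfold opcomp. split; [|split].
  - intros. rewrite T1, S1. reflexivity.
  - intros. rewrite T2, S2. reflexivity.
  - exists (M1 * M2). intros x. eapply Rle_trans; [apply H1|].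
    rewrite Rmult_assoc. apply Rmult_le_compat_l; auto.
Qed.

Lemma bl_add (S T : X -> X) :
  bounded_linear X S -> bounded_linear X T -> bounded_linear X (fun x => vadd (S x) (T x)).
Proof.
  intros HS HT. destruct (bound_nonneg S HS) as [M1 [P1 H1]].
  destruct (bound_nonneg T HT) as [M2 [P2 H2]].
  destruct HS as [S1 [S2 _]], HT as [T1 [T2 _]]. split; [|split].
  - intros. rewrite T1, S1, !vadd_assoc. f_equal.
    rewrite <- !vadd_assoc. f_equal. apply vadd_comm.
  - intros. rewrite T2, S2, vscal_distr_l. reflexivity.
  - exists (M1 + M2). intros x. eapply Rle_trans; [apply vnorm_triangle|].
    specialize (H1 x). specialize (H2 x). lra.
Qed.

Lemma bl_opp (T : X -> X) : bounded_linear X T -> bounded_linear X (fun x => vopp (T x)).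
Proof.
  intros HT. destruct (bound_nonneg T HT) as [M [PM HM]].
  destruct HT as [T1 [T2 _]]. split; [|split].
  - intros. rewrite T1, vopp_add. reflexivity.
  - intros. rewrite T2, vopp_vscal. reflexivity.
  - exists M. intros x. rewrite vnorm_opp. auto.
Qed.

Lemma bl_scal (a : Cplx) : bounded_linear X (vscal a).
Proof.
  split; [|split].
  - intros. apply vscal_distr_l.
  - intros. apply vscal_comm.
  - exists (Cabs a). intros. rewrite vnorm_scal. lra.
Qed.

Lemma bl_zero : bounded_linear X (fun _ => vzero X).
Proof.
  split; [|split].
  - intros. rewrite vadd_0. reflexivity.
  - intros. rewrite vscal_vzero. reflexivity.
  - exists 0. intros x. rewrite vnorm_zero. pose proof (vnorm_ge0 x). lra.
Qed.

Lemma bl_id : bounded_linear X (opId X).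
Proof. unfold opId. split; [|split]; auto. exists 1. intros. lra. Qed.

Definition Op : Type := {T : X -> X | bounded_linear X T}.
Definition ozero : Op := exist _ _ bl_zero.
Definition oone : Op := exist _ _ bl_id.
Definition oadd (f g : Op) : Op := exist _ _ (bl_add _ _ (proj2_sig f) (proj2_sig g)).
Definition oopp (f : Op) : Op := exist _ _ (bl_opp _ (proj2_sig f)).
Definition osub (f g : Op) : Op :=
  exist _ (opsub X (proj1_sig f) (proj1_sig g)) (bl_add _ _ (proj2_sig f) (bl_opp _ (proj2_sig g))).
Definition omul (f g : Op) : Op := exist _ _ (bl_comp _ _ (proj2_sig f) (proj2_sig g)).
Definition oscal (a : Cplx) : Op := exist _ _ (bl_scal a).

Lemma op_ext (f g : Op) : (forall x, proj1_sig f x = proj1_sig g x) -> f = g.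
Proof.
  destruct f as [f Hf], g as [g Hg]; simpl. intros H.
  assert (f = g) by (apply functional_extensionality; auto). subst.
  f_equal. apply proof_irrelevance.
Qed.

#[local] Instance Op_ops : @Ring_ops Op ozero oone oadd omul osub oopp (@eq Op) := {}.

#[local] Instance Op_ring : @Ring Op ozero oone oadd omul osub oopp (@eq Op) Op_ops.
Proof.
  constructor; try exact eq_equivalence; try (intros ? ? -> ? ? ->; reflexivity);
    try (intros ? ? ->; reflexivity); intros; apply op_ext; intros; simpl; unfold opcomp; auto.
  - apply vadd_0l.
  - apply vadd_comm.
  - apply vadd_assoc.
  - apply (proj1 (proj2_sig z)).
  - apply vadd_opp.
Qed.

Lemma oscal_central_scalars : @central_scalars Op ozero oone omul oscal.
Proof.
  split.
  - apply op_ext. intros. apply vscal_1.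
  - apply op_ext. intros. apply vscal_C0.
  - intros. apply op_ext. intros. apply vscal_assoc.
  - intros l f. apply op_ext. intros. simpl. unfold opcomp.
    symmetry. apply (proj1 (proj2 (proj2_sig f))).
Qed.

Lemma invertibleL_iff (t : Op) : invertibleL X (proj1_sig t) <-> @invertible Op oone omul t.
Proof.
  split.
  - intros [S [HS [H1 H2]]]. exists (exist _ S HS).
    split; apply op_ext; intros v; [exact (equal_f H1 v)|exact (equal_f H2 v)].
  - intros [v [H1 H2]]. exists (proj1_sig v). split; [exact (proj2_sig v)|].
    split; [exact (f_equal (@proj1_sig _ _) H1)|exact (f_equal (@proj1_sig _ _) H2)].
Qed.

Lemma quasinilpotent_iff (t : Op) :
  quasinilpotent X (proj1_sig t) <-> @qnil Op oone omul osub oscal t.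
Proof.
  split.
  - intros H l Hl. apply (invertibleL_iff (osub (oscal l) t)).
    apply NNPP. intros Hn. exact (Hl (H l Hn)).
  - intros H l Hs. apply NNPP. intros Hl. apply Hs.
    apply (invertibleL_iff (osub (oscal l) t)). exact (H l Hl).
Qed.

Lemma has_gDrazin_iff (t : Op) :
  has_gDrazin X (proj1_sig t) <-> @gdrazin Op oone omul osub oscal t.
Proof.
  split.
  - intros [S [HS [Heq [Hc Hq]]]]. exists (exist _ S HS). split; [|split].
    + apply op_ext. intros v. exact (equal_f Heq v).
    + intros u Hu. apply op_ext. intros v.
      exact (equal_f (Hc (proj1_sig u) (proj2_sig u) (f_equal (@proj1_sig _ _) Hu)) v).
    + exact (proj1 (quasinilpotent_iff (osub t (omul t (omul t (exist _ S HS))))) Hq).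
  - intros [s [Hs [Hc Hq]]]. exists (proj1_sig s). split; [exact (proj2_sig s)|].
    split; [|split].
    + exact (f_equal (@proj1_sig _ _) Hs).
    + intros U HU HUt.
      assert (E : omul (exist _ U HU) t = omul t (exist _ U HU))
        by (apply op_ext; intros v; exact (equal_f HUt v)).
      exact (f_equal (@proj1_sig _ _) (Hc _ E)).
    + exact (proj2 (quasinilpotent_iff (osub t (omul t (omul t s)))) Hq).
Qed.

Lemma has_gDrazin_shift_swap (A B : X -> X) (lam : Cplx) :
  bounded_linear X A -> bounded_linear X B ->
  has_gDrazin X (shift X lam (opcomp X A B)) -> has_gDrazin X (shift X lam (opcomp X B A)).
Proof.
  intros HA HB H.
  set (a := exist _ A HA : Op). set (b := exist _ B HB : Op).
  apply (has_gDrazin_iff (osub (oscal lam) (omul b a))).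
  apply (gdrazin_swap oscal oscal_central_scalars a b lam).
  exact (proj1 (has_gDrazin_iff (osub (oscal lam) (omul a b))) H).
Qed.
End BoundedOperators.

Theorem corollary4p3 (X : CBanach) (A B : X -> X) :
  bounded_linear X A -> bounded_linear X B ->
  forall lam : Cplx, sigma_d X (opcomp X A B) lam <-> sigma_d X (opcomp X B A) lam.
Proof.
  intros HA HB lam. unfold sigma_d.
  split; intros Hnot H; apply Hnot; apply has_gDrazin_shift_swap; assumption.
Qed.
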